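(* Let $g:[a,b]\to\mathbb R$ be a derivator with $D_g$ finite; write $D_g=\{x_1<x_2<\dots<x_{n-1}\}$ and set $x_0=a$, $x_n=b$ (so $x_1=a$ if $a\in D_g$). Then the linear map $$\Psi:\mathrm{UC}_g([a,b])\to\mathrm{UC}_{g^C}([x_0,x_1])\oplus\bigoplus_{j=2}^n\mathrm{UC}_{g^C}((x_{j-1},x_j]),\qquad \Psi(f)=\big(f|_{[x_0,x_1]},f|_{(x_1,x_2]},\dots,f|_{(x_{n-1},x_n]}\big),$$ is an isometric isomorphism, where the direct sum carries the norm $\|(v_1,\dots,v_n)\|=\max_j\|v_j\|_\infty$.
   Context: $\mathbb F\in\{\mathbb R,\mathbb C\}$. A derivator is a nondecreasing, left-continuous $g:[a,b]\to\mathbb R$. For $x\in[a,b)$, $\Delta g(x)=g(x^+)-g(x)$ and $D_g=\{x\in[a,b):\Delta g(x)>0\}$. The jump part is $g^B(x)=\sum_{y\in[a,x)\cap D_g}\Delta g(y)$ and the continuous part is $g^C=g-g^B$ (a continuous derivator). For a derivator $h$ and a set $J\subset[a,b]$ (here an interval), $\mathrm{UC}_h(J)$ is the space of functions $f:J\to\mathbb F$ that are uniformly $h$-continuous on $J$ (for every $\varepsilon>0$ there is $\delta>0$ such that for all $x,y\in J$, $|h(x)-h(y)|<\delta$ implies $|f(x)-f(y)|<\varepsilon$), with the supremum norm over $J$. $\mathrm{UC}_g([a,b])$ is this space for $h=g$, $J=[a,b]$. *)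

From Stdlib Require Import Reals List Sorted ClassicalEpsilon.
From Coquelicot Require Import Coquelicot.
Open Scope R_scope.

(* g : [a,b] -> R is represented by g : R -> R; only values on [a,b] matter. *)
Definition derivator (a b : R) (g : R -> R) : Prop :=
  (forall x y, a <= x -> x <= y -> y <= b -> g x <= g y) /\
  (forall x, a < x <= b -> filterlim g (at_left x) (locally (g x))).

(* g(x^+) : the right limit of g at x (exists for a derivator, x in [a,b)). *)
Definition rlim (g : R -> R) (x : R) : R :=
  epsilon (inhabits 0) (fun l => filterlim g (at_right x) (locally l)).

Definition Delta (g : R -> R) (x : R) : R := rlim g x - g x.

Definition Dg (a b : R) (g : R -> R) (x : R) : Prop :=
  a <= x < b /\ Delta g x > 0.

(* Jump part, for D_g enumerated by the list xs:
   g^B(x) = sum_{y in [a,x) ∩ D_g} Delta g y   (elements of xs lie in [a,b)). *)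
Fixpoint sum_jumps (g : R -> R) (a x : R) (xs : list R) : R :=
  match xs with
  | nil => 0
  | y :: ys =>
      (if Rle_dec a y then if Rlt_dec y x then Delta g y else 0 else 0)
      + sum_jumps g a x ys
  end.

Definition gB (g : R -> R) (a : R) (xs : list R) (x : R) : R := sum_jumps g a x xs.
Definition gC (g : R -> R) (a : R) (xs : list R) (x : R) : R := g x - gB g a xs x.

Definition dom (J : R -> Prop) : Type := {x : R | J x}.

Definition UC {K : AbsRing} (h : R -> R) (J : R -> Prop) (f : dom J -> K) : Prop :=
  forall eps : R, eps > 0 -> exists delta : R, delta > 0 /\
    forall x y : dom J, Rabs (h (proj1_sig x) - h (proj1_sig y)) < delta ->
      abs (minus (f x) (f y)) < eps.

Definition supn {K : AbsRing} {J : R -> Prop} (f : dom J -> K) : R :=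
  real (Lub_Rbar (fun r => exists x, r = abs (f x))).

Definition ab (a b : R) (x : R) : Prop := a <= x <= b.

(* x_0 = a, x_1 < ... < x_{n-1} the elements of xs, x_n = b, n = |xs| + 1 *)
Definition pts (a b : R) (xs : list R) : list R := a :: xs ++ b :: nil.
Definition pt (a b : R) (xs : list R) (i : nat) : R := nth i (pts a b xs) 0.
Definition npieces (xs : list R) : nat := S (length xs).

(* piece j (0-based, j < n): j = 0 : [x_0, x_1];  j >= 1 : (x_j, x_{j+1}].
   (Intersected with [a,b], which does not change it under the hypotheses.) *)
Definition piece (a b : R) (xs : list R) (j : nat) (x : R) : Prop :=
  ab a b x /\
  match j with
  | O => pt a b xs 0 <= x <= pt a b xs 1
  | S _ => pt a b xs j < x <= pt a b xs (S j)
  end.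

Definition Idx (n : nat) : Type := {j : nat | (j < n)%nat}.

Definition DSum (K : AbsRing) (a b : R) (xs : list R) : Type :=
  forall j : Idx (npieces xs), dom (piece a b xs (proj1_sig j)) -> K.

(* max norm on the direct sum (sup over the finite nonempty index set = max) *)
Definition dsnorm {K : AbsRing} {a b : R} {xs : list R} (v : DSum K a b xs) : R :=
  real (Lub_Rbar (fun r => exists j, r = supn (v j))).

Definition Psi {K : AbsRing} (a b : R) (xs : list R) (f : dom (ab a b) -> K)
  : DSum K a b xs :=
  fun j y => f (exist _ (proj1_sig y) (proj1 (proj2_sig y))).

(* The pieces are the level sets of [count_lt x xs], the number of jump points below [x]:
   on each piece g^B is constant, so g and g^C differ by a constant and uniform
   g-continuity there is uniform g^C-continuity. Conversely, points of different pieces are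
   separated by a jump point, so their g-values differ by at least the smallest jump; below
   that threshold, g-closeness forces two points into one piece, which makes the function
   glued from uniformly g^C-continuous pieces uniformly g-continuous. Uniformly g-continuous
   functions are bounded, and the pieces cover [a, b], so the sup norm is the maximum of
   the sup norms of the pieces. *)

From Pilot Require Import Defs.
From Stdlib Require Import Reals List Sorted Lra Lia Classical ClassicalEpsilon FunctionalExtensionality.
From Coquelicot Require Import Coquelicot.
Open Scope R_scope.

Fixpoint count_lt (x : R) (l : list R) : nat :=
  match l with
  | nil => O
  | y :: ys => ((if Rlt_dec y x then 1 else 0) + count_lt x ys)%nat
  end.

Lemma count_lt_le_length x l : (count_lt x l <= length l)%nat.
Proof. induction l; simpl; [lia|]. destruct Rlt_dec; lia. Qed.

Lemma count_lt_le x y l : x <= y -> (count_lt x l <= count_lt y l)%nat.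
Proof.
  intros Hxy. induction l as [|w l IH]; simpl; [lia|].
  destruct (Rlt_dec w x), (Rlt_dec w y); lia || lra.
Qed.

Lemma count_lt_eq_iff x y l : x <= y ->
  count_lt x l = count_lt y l <-> (forall z, In z l -> ~ (x <= z < y)).
Proof.
  intros Hxy. induction l as [|w l IH]; simpl; [tauto|].
  pose proof (count_lt_le x y l Hxy) as Hle.
  destruct (Rlt_dec w x), (Rlt_dec w y); split.
  - intros Heq z [<-|Hz]; [lra|]. apply IH; [lia|exact Hz].
  - intros Hno. apply f_equal, IH. auto.
  - lra.
  - lra.
  - intros; lia.
  - intros Hno. exfalso. apply (Hno w); auto. lra.
  - intros Heq z [<-|Hz]; [lra|]. apply IH; [lia|exact Hz].
  - intros Hno. apply IH. auto.
Qed.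

Lemma count_lt_0 x l : (forall z, In z l -> x <= z) -> count_lt x l = O.
Proof.
  induction l as [|w l IH]; simpl; auto. intros H.
  rewrite IH by auto. specialize (H w (or_introl eq_refl)).
  destruct Rlt_dec; [lra|reflexivity].
Qed.

Lemma sum_jumps_no_between g a x y l : x <= y ->
  (forall z, In z l -> ~ (x <= z < y)) -> sum_jumps g a x l = sum_jumps g a y l.
Proof.
  intros Hxy. induction l as [|w l IH]; simpl; auto.
  intros H. rewrite IH by auto.
  specialize (H w (or_introl eq_refl)).
  destruct Rle_dec; auto. destruct (Rlt_dec w x), (Rlt_dec w y); lra.
Qed.

Lemma gB_count_lt g a l x y : count_lt x l = count_lt y l -> gB g a l x = gB g a l y.
Proof.
  unfold gB. intros H. destruct (Rle_dec x y).
  - apply sum_jumps_no_between; auto. apply count_lt_eq_iff; auto.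
  - symmetry. apply sum_jumps_no_between; [lra|]. apply count_lt_eq_iff; auto; lra.
Qed.

Definition slot (b : R) (l : list R) (j : nat) (x : R) : Prop :=
  match j with
  | O => x <= nth 0 (l ++ b :: nil) 0
  | S k => nth k (l ++ b :: nil) 0 < x <= nth (S k) (l ++ b :: nil) 0
  end.

Lemma count_lt_slot b l : StronglySorted Rlt l -> (forall z, In z l -> z < b) ->
  forall j x, (j <= length l)%nat -> x <= b -> (count_lt x l = j <-> slot b l j x).
Proof.
  induction l as [|y ys IH]; intros Hs Hb j x Hj Hx.
  - simpl in Hj. assert (j = O) by lia. subst. simpl. tauto.
  - inversion Hs as [|? ? Hs' Hall]; subst.
    rewrite Forall_forall in Hall.
    assert (Hy : forall k, (k <= length ys)%nat -> y < nth k (ys ++ b :: nil) 0).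
    { intros k Hk. assert (Hin : In (nth k (ys ++ b :: nil) 0) (ys ++ b :: nil)).
      { apply nth_In. rewrite length_app; simpl; lia. }
      apply in_app_or in Hin. destruct Hin as [Hz|[<-|[]]]; auto. apply Hb; simpl; auto. }
    simpl in Hj. specialize (IH Hs' (fun z Hz => Hb z (or_intror Hz))).
    simpl count_lt. destruct (Rlt_dec y x) as [Hyx|Hyx].
    + destruct j as [|k]; [simpl; split; [lia|lra]|].
      specialize (IH k x ltac:(lia) Hx). unfold slot in *. simpl app.
      destruct k as [|m]; simpl nth.
      * split; [intros H; split; [lra| apply IH; lia]|]. intros [_ H]. apply IH in H. lia.
      * split; [intros H; apply IH; lia|]. intros H. apply IH in H. lia.
    + rewrite count_lt_0 by (intros z Hz; specialize (Hall z Hz); lra).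
      destruct j as [|k]; [simpl; split; auto; lra|].
      unfold slot. split; [lia|]. intros [H1 H2]. exfalso. simpl app in H1.
      destruct k as [|m]; simpl nth in H1; [lra|].
      assert (y < nth m (ys ++ b :: nil) 0) by (apply Hy; lia). lra.
Qed.

Lemma piece_iff_count_lt a b xs j x : StronglySorted Rlt xs -> (forall z, In z xs -> z < b) ->
  (j <= length xs)%nat -> (piece a b xs j x <-> ab a b x /\ count_lt x xs = j).
Proof.
  intros Hs Hb Hj. unfold piece, pt, pts.
  split; intros [Hab Hx]; split; auto; unfold ab in Hab;
    destruct j as [|k]; simpl nth in *.
  - apply (count_lt_slot b xs Hs Hb O x); [lia|lra|exact (proj2 Hx)].
  - apply (count_lt_slot b xs Hs Hb (S k) x); auto; lra.
  - split; [lra|]. apply (count_lt_slot b xs Hs Hb O x); [lia|lra|auto].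
  - apply (count_lt_slot b xs Hs Hb (S k) x); auto; lra.
Qed.

Lemma abs_le_abs_plus_minus {K : AbsRing} (x y : K) : abs x <= abs y + abs (minus x y).
Proof.
  rewrite <- (minus_zero_r x) at 1. rewrite (minus_trans y), minus_zero_r.
  rewrite Rplus_comm. apply abs_triangle.
Qed.

Lemma real_Lub_Rbar_le (E : R -> Prop) u :
  (forall r, E r -> r <= u) -> 0 <= u -> real (Lub_Rbar E) <= u.
Proof.
  intros H Hu. pose proof (Lub_Rbar_correct E) as [_ Hlub].
  assert (Rbar_le (Lub_Rbar E) u) by (apply Hlub; intros r Hr; apply H; auto).
  destruct (Lub_Rbar E); simpl in *; auto; contradiction.
Qed.

Lemma le_real_Lub_Rbar (E : R -> Prop) r M :
  E r -> (forall r, E r -> r <= M) -> r <= real (Lub_Rbar E).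
Proof.
  intros Hr H. pose proof (Lub_Rbar_correct E) as [Hub Hlub].
  assert (Rbar_le (Lub_Rbar E) M) by (apply Hlub; intros s Hs; apply H; auto).
  specialize (Hub r Hr).
  destruct (Lub_Rbar E); simpl in *; auto; contradiction.
Qed.

Lemma supn_le {K : AbsRing} {J : R -> Prop} (f : dom J -> K) u :
  (forall x, abs (f x) <= u) -> 0 <= u -> supn f <= u.
Proof. intros H Hu. apply real_Lub_Rbar_le; auto. intros r [x ->]. auto. Qed.

Lemma abs_le_supn {K : AbsRing} {J : R -> Prop} (f : dom J -> K) M :
  (forall x, abs (f x) <= M) -> forall x, abs (f x) <= supn f.
Proof. intros HM x. apply le_real_Lub_Rbar with M; [eauto|]. intros r [y ->]. auto. Qed.

Lemma common_delta n (P : nat -> R -> Prop) :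
  (forall j d d', 0 < d' <= d -> P j d -> P j d') ->
  (forall j, (j < n)%nat -> exists d, d > 0 /\ P j d) ->
  exists d, d > 0 /\ forall j, (j < n)%nat -> P j d.
Proof.
  intros Hmono. induction n as [|n IH]; intros H.
  - exists 1. split; [lra|]. intros; lia.
  - destruct IH as [d1 [Hd1 H1]]. { intros j Hj. apply H. lia. }
    destruct (H n ltac:(lia)) as [d2 [Hd2 H2]].
    exists (Rmin d1 d2). split; [apply Rmin_pos; lra|].
    intros j Hj. destruct (Nat.eq_dec j n) as [->|Hne].
    + apply Hmono with d2; auto. split; [apply Rmin_pos; lra| apply Rmin_r].
    + apply Hmono with d1; [split; [apply Rmin_pos; lra| apply Rmin_l]|]. apply H1; lia.
Qed.

Lemma min_pos_list (F : R -> R) (l : list R) : (forall z, In z l -> F z > 0) ->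
  exists m, m > 0 /\ forall z, In z l -> m <= F z.
Proof.
  induction l as [|w l IH]; intros H.
  - exists 1. split; [lra|]. intros z [].
  - destruct IH as [m [Hm Hmin]]. { intros; apply H; simpl; auto. }
    exists (Rmin m (F w)). split. { apply Rmin_pos; auto. apply H; simpl; auto. }
    intros z [<-|Hz]; [apply Rmin_r|]. eapply Rle_trans; [apply Rmin_l| auto].
Qed.

Definition nondecreasing_on (a b : R) (g : R -> R) : Prop :=
  forall x y, a <= x -> x <= y -> y <= b -> g x <= g y.

Lemma rlim_correct a b g x : nondecreasing_on a b g -> a <= x < b ->
  filterlim g (at_right x) (locally (rlim g x)).
Proof.
  intros Hm Hx. unfold rlim. apply epsilon_spec.
  set (E := fun r => exists t, x < t <= b /\ r = g t).
  pose proof (Glb_Rbar_correct E) as [Hlb Hglb].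
  destruct (Glb_Rbar E) as [L| |] eqn:HL.
  - exists L. apply filterlim_locally. intros eps.
    assert (Hex : exists t, x < t <= b /\ g t < L + eps).
    { apply NNPP. intros Hn.
      assert (Rbar_le (L + eps) L).
      { apply Hglb. intros r [t [Ht ->]]. simpl. apply Rnot_lt_le. intros Hlt. apply Hn. eauto. }
      simpl in *. destruct eps; simpl in *; lra. }
    destruct Hex as [t [Ht Hgt]].
    assert (Hd : 0 < t - x) by lra.
    exists (mkposreal _ Hd). intros u Hu Hxu. simpl in Hu.
    apply Rabs_lt_between' in Hu. apply Rabs_lt_between'.
    assert (g u <= g t) by (apply Hm; lra).
    assert (Rbar_le L (g u)) by (apply Hlb; exists u; split; auto; lra).
    simpl in *. lra.
  - exfalso. assert (Rbar_le p_infty (g b)) by (apply Hlb; exists b; split; auto; lra).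
    auto.
  - exfalso. assert (Rbar_le (g x) m_infty); [|auto].
    apply Hglb. intros r [t [Ht ->]]. simpl. apply Hm; lra.
Qed.

Lemma rlim_le a b g x y : nondecreasing_on a b g -> a <= x < b -> x < y <= b ->
  rlim g x <= g y.
Proof.
  intros Hm Hx Hy. pose proof (rlim_correct a b g x Hm Hx) as Hl.
  apply Rnot_lt_le. intros Hlt.
  assert (He : 0 < rlim g x - g y) by lra.
  apply filterlim_locally with (eps := mkposreal _ He) in Hl.
  destruct Hl as [d Hd]. simpl in Hd.
  assert (Hdpos : 0 < Rmin d (y - x)) by (destruct d; apply Rmin_pos; simpl; lra).
  pose proof (Rmin_l d (y - x)). pose proof (Rmin_r d (y - x)).
  set (u := x + Rmin d (y - x) / 2).
  assert (Hu : Rabs (u - x) < d) by (unfold u; rewrite Rabs_pos_eq; lra).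
  specialize (Hd u Hu ltac:(unfold u; lra)). apply Rabs_lt_between' in Hd.
  assert (g u <= g y) by (apply Hm; unfold u; lra). lra.
Qed.

Section UC_bounded.

Context {K : AbsRing} (a b : R) (g : R -> R) (f : dom (ab a b) -> K).
Hypothesis (Hmono : nondecreasing_on a b g) (Hab : a <= b).

(* Chop the range [g a, g b] of g into strips of height [d]: two points whose g-values lie
   in the same strip are d-close, so one more strip costs at most 1 in the bound. *)
Lemma UC_bounded_on_strips d : d > 0 ->
  (forall x y : dom (ab a b), Rabs (g (proj1_sig x) - g (proj1_sig y)) < d ->
     abs (minus (f x) (f y)) < 1) ->
  forall k : nat, exists M, forall x, g (proj1_sig x) <= g a + INR k * d -> abs (f x) <= M.
Proof.
  intros Hd Hu. assert (Ha : ab a b a) by (unfold ab; lra).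
  induction k as [|k [M HM]].
  - exists (abs (f (exist _ a Ha)) + 1). intros x Hgx.
    change (g (proj1_sig x) <= g a + 0 * d) in Hgx.
    assert (g a <= g (proj1_sig x)) by (apply Hmono; destruct (proj2_sig x); lra).
    assert (Hxa : Rabs (g (proj1_sig x) - g a) < d) by (rewrite Rabs_pos_eq; lra).
    specialize (Hu x (exist _ a Ha) Hxa).
    pose proof (abs_le_abs_plus_minus (f x) (f (exist _ a Ha))). lra.
  - rewrite S_INR.
    destruct (classic (exists x0 : dom (ab a b),
      g a + INR k * d < g (proj1_sig x0) <= g a + (INR k + 1) * d)) as [[x0 Hx0]|Hno].
    + exists (Rmax M (abs (f x0) + 1)). intros x Hx.
      destruct (Rle_dec (g (proj1_sig x)) (g a + INR k * d)).
      * eapply Rle_trans; [apply HM; auto| apply Rmax_l].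
      * assert (Habs : Rabs (g (proj1_sig x) - g (proj1_sig x0)) < d) by (apply Rabs_def1; lra).
        specialize (Hu x x0 Habs). pose proof (abs_le_abs_plus_minus (f x) (f x0)).
        eapply Rle_trans; [|apply Rmax_r]. lra.
    + exists M. intros x Hx. apply HM.
      apply Rnot_lt_le. intros Hlt. apply Hno. exists x. split; auto.
Qed.

Lemma UC_bounded : UC g (ab a b) f -> exists M, forall x, abs (f x) <= M.
Proof.
  intros Huc. destruct (Huc 1 ltac:(lra)) as [d [Hd Hu]].
  assert (Hgab : 0 <= (g b - g a) / d).
  { apply Rdiv_le_0_compat; [|lra]. assert (g a <= g b) by (apply Hmono; lra). lra. }
  destruct (nfloor_ex _ Hgab) as [k [_ Hk]].
  destruct (UC_bounded_on_strips d Hd Hu (S k)) as [M HM]. exists M.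
  intros x. apply HM. rewrite S_INR.
  assert (g (proj1_sig x) <= g b) by (apply Hmono; destruct (proj2_sig x); lra).
  apply Rmult_lt_compat_r with (r := d) in Hk; [|lra].
  unfold Rdiv in Hk. rewrite Rmult_assoc, Rinv_l in Hk by lra. lra.
Qed.

End UC_bounded.

(* The pieces are disjoint, so the choice is unique (lemma [glue_piece]). *)
Definition glue {K : AbsRing} a b xs (v : DSum K a b xs) (x : dom (ab a b)) : K :=
  epsilon (inhabits zero) (fun k => exists (j : Idx (npieces xs))
    (p : piece a b xs (proj1_sig j) (proj1_sig x)), k = v j (exist _ (proj1_sig x) p)).

Section Partition.

Context {K : AbsRing} (a b : R) (g : R -> R) (xs : list R).
Hypothesis Hab : a <= b.
Hypothesis Hder : derivator a b g.
Hypothesis Hsorted : StronglySorted Rlt xs.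
Hypothesis Hjumps : forall z, In z xs -> Dg a b g z.

Lemma jumps_lt z : In z xs -> z < b.
Proof. intros Hz. apply Hjumps, Hz. Qed.

Lemma count_lt_lt_npieces x : (count_lt x xs < npieces xs)%nat.
Proof. pose proof (count_lt_le_length x xs). unfold npieces. lia. Qed.

Lemma piece_count_lt x : ab a b x -> piece a b xs (count_lt x xs) x.
Proof.
  intros Hx. apply piece_iff_count_lt; auto using jumps_lt, count_lt_le_length.
Qed.

Lemma piece_count_lt_eq j x : (j < npieces xs)%nat -> piece a b xs j x -> count_lt x xs = j.
Proof.
  intros Hj Hx. unfold npieces in Hj.
  apply piece_iff_count_lt in Hx; auto using jumps_lt; [tauto|lia].
Qed.

Lemma gC_sub_piece j x y : (j < npieces xs)%nat -> piece a b xs j x -> piece a b xs j y ->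
  gC g a xs x - gC g a xs y = g x - g y.
Proof.
  intros Hj Hx Hy. unfold gC.
  rewrite (gB_count_lt g a xs x y); [ring|].
  rewrite (piece_count_lt_eq j x), (piece_count_lt_eq j y); auto.
Qed.

Lemma Psi_UC (f : dom (ab a b) -> K) : UC g (ab a b) f ->
  forall j : Idx (npieces xs), UC (gC g a xs) (piece a b xs (proj1_sig j)) (Psi a b xs f j).
Proof.
  intros Huc [j Hj] eps Heps. destruct (Huc eps Heps) as [d [Hd Hu]].
  exists d. split; auto. intros [x px] [y py] Hxy. apply Hu. simpl in *.
  rewrite <- (gC_sub_piece j x y); auto.
Qed.

Lemma Psi_inj (f1 f2 : dom (ab a b) -> K) : Psi a b xs f1 = Psi a b xs f2 -> f1 = f2.
Proof.
  intros Heq. apply functional_extensionality. intros [x Hx].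
  pose proof (piece_count_lt x Hx) as p.
  apply (f_equal (fun v : DSum K a b xs =>
    v (exist _ (count_lt x xs) (count_lt_lt_npieces x)) (exist _ x p))) in Heq.
  unfold Psi in Heq; simpl in Heq.
  rewrite (proof_irrelevance _ Hx (proj1 p)). exact Heq.
Qed.

Lemma glue_piece (v : DSum K a b xs) x j p :
  glue a b xs v x = v j (exist _ (proj1_sig x) p).
Proof.
  unfold glue.
  destruct (@epsilon_spec K (inhabits zero) (fun k => exists (j : Idx (npieces xs))
    (p : piece a b xs (proj1_sig j) (proj1_sig x)), k = v j (exist _ (proj1_sig x) p)))
    as [j' [p' Hspec]]; [now exists (v j (exist _ (proj1_sig x) p)), j, p|].
  transitivity (v j' (exist _ (proj1_sig x) p')); [exact Hspec|]. clear Hspec.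
  destruct j as [j Hj], j' as [j' Hj']; simpl in *.
  assert (j = j') as <-.
  { rewrite <- (piece_count_lt_eq j (proj1_sig x)), <- (piece_count_lt_eq j' (proj1_sig x)); auto. }
  rewrite (proof_irrelevance _ Hj' Hj), (proof_irrelevance _ p' p). reflexivity.
Qed.

Lemma Psi_glue (v : DSum K a b xs) : Psi a b xs (glue a b xs v) = v.
Proof.
  apply functional_extensionality_dep. intros j.
  apply functional_extensionality. intros [y py].
  exact (glue_piece v (exist _ y (proj1 py)) j py).
Qed.

(* Between two points of different pieces lies a jump point [z], and
   [g y - g x >= g(z+) - g z = Delta g z]. *)
Lemma jump_gap : exists m, m > 0 /\ forall x y, ab a b x -> ab a b y -> x <= y ->
  count_lt x xs <> count_lt y xs -> m <= g y - g x.
Proof.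
  destruct (min_pos_list (Defs.Delta g) xs) as [m [Hm Hmin]]; [intros z Hz; apply Hjumps, Hz|].
  exists m. split; auto. intros x y Hx Hy Hxy Hne.
  destruct (classic (exists z, In z xs /\ x <= z < y)) as [[z [Hz Hxz]]|Hno].
  - specialize (Hmin z Hz). destruct (Hjumps z Hz) as [Hzab _].
    destruct Hder as [Hmono _]. unfold ab in *.
    pose proof (rlim_le a b g z y Hmono ltac:(lra) ltac:(lra)).
    assert (g x <= g z) by (apply Hmono; lra).
    unfold Defs.Delta in Hmin. lra.
  - exfalso. apply Hne, count_lt_eq_iff; auto. intros z Hz Hc. apply Hno. eauto.
Qed.

Lemma glue_UC (v : DSum K a b xs) :
  (forall j, UC (gC g a xs) (piece a b xs (proj1_sig j)) (v j)) -> UC g (ab a b) (glue a b xs v).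
Proof.
  intros Hv eps Heps.
  destruct (common_delta (npieces xs) (fun j d => forall (Hj : (j < npieces xs)%nat)
      (x y : dom (piece a b xs j)),
      Rabs (gC g a xs (proj1_sig x) - gC g a xs (proj1_sig y)) < d ->
      abs (minus (v (exist _ j Hj) x) (v (exist _ j Hj) y)) < eps)) as [d [Hd Hdelta]].
  { intros j d d' Hd' P Hj x y Hxy. apply P. lra. }
  { intros j Hj. destruct (Hv (exist _ j Hj) eps Heps) as [d [Hd P]].
    exists d. split; auto. intros Hj' x y Hxy.
    rewrite (proof_irrelevance _ Hj' Hj). apply P, Hxy. }
  destruct jump_gap as [m [Hm Hgap]].
  exists (Rmin d m). split; [apply Rmin_pos; lra|].
  intros x y Hxy. pose proof (Rmin_l d m). pose proof (Rmin_r d m).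
  pose proof (piece_count_lt _ (proj2_sig x)) as px.
  pose proof (piece_count_lt _ (proj2_sig y)) as py.
  destruct (Nat.eq_dec (count_lt (proj1_sig x) xs) (count_lt (proj1_sig y) xs)) as [He|Hne].
  - rewrite <- He in py.
    set (j := exist (fun j => (j < npieces xs)%nat) _ (count_lt_lt_npieces (proj1_sig x))).
    rewrite (glue_piece v x j px), (glue_piece v y j py).
    apply (Hdelta _ (count_lt_lt_npieces _) _ (exist _ _ px) (exist _ _ py)). simpl.
    rewrite (gC_sub_piece (count_lt (proj1_sig x) xs)); auto using count_lt_lt_npieces. lra.
  - exfalso. apply Rabs_def2 in Hxy.
    destruct (Rle_dec (proj1_sig x) (proj1_sig y)) as [Hle|Hgt].
    + pose proof (Hgap _ _ (proj2_sig x) (proj2_sig y) Hle Hne). lra.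
    + pose proof (Hgap _ _ (proj2_sig y) (proj2_sig x) ltac:(lra) (not_eq_sym Hne)). lra.
Qed.

Lemma supn_Psi (f : dom (ab a b) -> K) : UC g (ab a b) f -> supn f = dsnorm (Psi a b xs f).
Proof.
  intros Huc. destruct (UC_bounded a b g f (proj1 Hder) Hab Huc) as [M HM].
  assert (Ha : ab a b a) by (unfold ab; lra).
  set (fa := f (exist _ a Ha)).
  assert (HM0 : 0 <= M) by (apply (Rle_trans _ (abs fa)); [apply abs_ge_0|apply HM]).
  assert (Hf_dsnorm : forall x, abs (f x) <= dsnorm (Psi a b xs f)).
  { intros x. pose proof (piece_count_lt _ (proj2_sig x)) as p.
    set (j := exist (fun j => (j < npieces xs)%nat) _ (count_lt_lt_npieces (proj1_sig x))).
    apply Rle_trans with (supn (Psi a b xs f j)).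
    - replace (f x) with (Psi a b xs f j (exist _ _ p)).
      + apply abs_le_supn with M. intros y. apply HM.
      + destruct x as [x Hx]. unfold Psi. do 2 f_equal. apply proof_irrelevance.
    - apply le_real_Lub_Rbar with M.
      + now exists j.
      + intros r [j' ->]. apply supn_le; [intros y; apply HM|exact HM0]. }
  assert (Hf_supn : forall x, abs (f x) <= supn f) by (apply abs_le_supn with M, HM).
  assert (Hsupn0 : 0 <= supn f) by (apply (Rle_trans _ (abs fa)); [apply abs_ge_0|apply Hf_supn]).
  apply Rle_antisym.
  - apply supn_le; [exact Hf_dsnorm|].
    apply (Rle_trans _ (abs fa)); [apply abs_ge_0|apply Hf_dsnorm].
  - apply real_Lub_Rbar_le; [|exact Hsupn0].
    intros r [j ->]. apply supn_le; [intros y; apply Hf_supn|exact Hsupn0].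
Qed.

End Partition.

Theorem mainTheorem16 :
  forall (K : AbsRing), K = R_AbsRing \/ K = C_AbsRing ->
  forall (a b : R) (g : R -> R) (xs : list R),
    a < b ->
    derivator a b g ->
    Sorted Rlt xs ->
    (forall x, Dg a b g x <-> In x xs) ->
    (forall f : dom (ab a b) -> K, UC g (ab a b) f ->
       forall j : Idx (npieces xs), UC (gC g a xs) (piece a b xs (proj1_sig j)) (Psi a b xs f j)) /\
    (forall (c : K) (f1 f2 : dom (ab a b) -> K),
       Psi a b xs (fun x => plus (mult c (f1 x)) (f2 x)) =
       (fun j y => plus (mult c (Psi a b xs f1 j y)) (Psi a b xs f2 j y))) /\
    (forall f1 f2 : dom (ab a b) -> K, UC g (ab a b) f1 -> UC g (ab a b) f2 ->
       Psi a b xs f1 = Psi a b xs f2 -> f1 = f2) /\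
    (forall v : DSum K a b xs,
       (forall j : Idx (npieces xs), UC (gC g a xs) (piece a b xs (proj1_sig j)) (v j)) ->
       exists f : dom (ab a b) -> K, UC g (ab a b) f /\ Psi a b xs f = v) /\
    (forall f : dom (ab a b) -> K, UC g (ab a b) f ->
       supn f = dsnorm (Psi a b xs f)).
Proof.
  (* The argument works over any absolute-value ring. *)
  intros K _ a b g xs Hab Hder Hsorted HDg.
  apply Sorted_StronglySorted in Hsorted; [|intros x y z; apply Rlt_trans].
  assert (Hjumps : forall z, In z xs -> Dg a b g z) by (intros z; apply HDg).
  split; [|split; [|split; [|split]]].
  - apply Psi_UC; auto.
  - reflexivity.
  - intros f1 f2 _ _. eapply Psi_inj; eauto.
  - intros v Hv. exists (glue a b xs v).
    split; [apply glue_UC|eapply Psi_glue]; eauto.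
  - apply supn_Psi; auto. lra.
Qed.
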